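(* Let $\mathcal U$ be a non-principal ultrafilter on $\mathbb N$ and let $\mathcal A$ be a unital Banach algebra such that the ultrapower $(\mathcal A)_{\mathcal U}$ is purely infinite. Then $\mathcal A$ is purely infinite.
   Context: A complex unital algebra $\mathcal B$ is purely infinite if it is not a division algebra and for every non-zero $a\in\mathcal B$ there exist $b,c\in\mathcal B$ with $bac=1_{\mathcal B}$. For an ultrafilter $\mathcal U$ on $\mathbb N$, the ultrapower is $(\mathcal A)_{\mathcal U}=\ell^\infty(\mathcal A)/c_{\mathcal U}(\mathcal A)$, where $\ell^\infty(\mathcal A)$ is the Banach algebra of bounded sequences in $\mathcal A$ with pointwise operations and sup norm, and $c_{\mathcal U}(\mathcal A)$ is the closed ideal of sequences $(a_n)$ with $\lim_{n\to\mathcal U}\|a_n\|=0$. *)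

From HB Require Import structures.
From mathcomp Require Import all_boot all_order all_algebra.
From mathcomp Require Import all_classical all_reals all_analysis.
From mathcomp Require Import complex.
Set Implicit Arguments. Unset Strict Implicit. Unset Printing Implicit Defensive.
Import Order.TTheory GRing.Theory Num.Theory.
Import numFieldNormedType.Exports.
Local Open Scope classical_set_scope.
Local Open Scope ring_scope.

Record unital_banach_algebra (R : realType) (A : completeNormedModType R[i])
    (mul : A -> A -> A) (one : A) : Prop := {
  ba_mulA : forall x y z, mul x (mul y z) = mul (mul x y) z;
  ba_mul1l : forall x, mul one x = x;
  ba_mul1r : forall x, mul x one = x;
  ba_mulDl : forall x y z, mul (x + y) z = mul x z + mul y z;
  ba_mulDr : forall x y z, mul x (y + z) = mul x y + mul x z;
  ba_mulZl : forall (k : R[i]) x y, mul (k *: x) y = k *: mul x y;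
  ba_mulZr : forall (k : R[i]) x y, mul x (k *: y) = k *: mul x y;
  ba_norm_mul : forall x y, `|mul x y| <= `|x| * `|y|
}.

(* Algebraic notions for a (unital) algebra presented by a carrier predicate
   S on a type T, modulo an equivalence eqv (a setoid presentation; for A
   itself S is everything and eqv is equality, for the ultrapower T is the
   type of sequences, S the bounded ones, and eqv equality modulo c_U). *)
Definition is_division_algebra (T : Type) (S : T -> Prop) (eqv : T -> T -> Prop)
    (mul : T -> T -> T) (one zero : T) : Prop :=
  ~ eqv one zero /\
  forall a, S a -> ~ eqv a zero ->
    exists b, S b /\ eqv (mul a b) one /\ eqv (mul b a) one.

Definition is_purely_infinite (T : Type) (S : T -> Prop) (eqv : T -> T -> Prop)
    (mul : T -> T -> T) (one zero : T) : Prop :=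
  ~ is_division_algebra S eqv mul one zero /\
  forall a, S a -> ~ eqv a zero ->
    exists b c, S b /\ S c /\ eqv (mul (mul b a) c) one.

Definition purely_infinite (R : realType) (A : completeNormedModType R[i])
    (mul : A -> A -> A) (one : A) : Prop :=
  is_purely_infinite (fun _ => True) (@eq A) mul one 0.

Definition bounded_seq (R : realType) (A : completeNormedModType R[i])
    (a : nat -> A) : Prop :=
  exists M : R[i], forall n, `|a n| <= M.

Definition c_U (R : realType) (A : completeNormedModType R[i])
    (U : set_system nat) (a : nat -> A) : Prop :=
  forall e : R[i], 0 < e -> \forall n \near U, `|a n| < e.

Definition ultrapower_eqv (R : realType) (A : completeNormedModType R[i])
    (U : set_system nat) (a b : nat -> A) : Prop :=
  c_U U (fun n => a n - b n).

Definition ultrapower_purely_infinite (R : realType)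
    (A : completeNormedModType R[i]) (U : set_system nat)
    (mul : A -> A -> A) (one : A) : Prop :=
  is_purely_infinite (@bounded_seq R A) (ultrapower_eqv U)
    (fun a b n => mul (a n) (b n)) (fun _ => one) (fun _ => 0).

Definition nonprincipal (U : set_system nat) : Prop :=
  forall n : nat, U <> principal_filter n.

(* The second clause ("every a <> 0 satisfies bac = 1 for some b, c") comes
   from the diagonal embedding: for a <> 0 the constant sequence (a) is not
   U-null, so some bounded (b_n), (c_n) make b_n a c_n tend to 1 along U; at
   an index where |1 - b_n a c_n| <= 1/2 the Neumann series gives a left
   inverse y, and then (y b_n) a c_n = 1.

   The first clause ("A is not a division algebra") is by contraposition: if
   A were a division algebra, the estimate |yx - 1| <= C |xy - 1| (uniform
   for bounded x, y with xy near 1) makes one-sided inverses in the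
   ultrapower two-sided, so bac = 1 there yields the inverse cb of a and the
   ultrapower would be a division algebra. *)
From HB Require Import structures.
From mathcomp Require Import all_boot all_order all_algebra.
From mathcomp Require Import all_classical all_reals all_analysis.
From mathcomp Require Import complex ring.
Set Implicit Arguments. Unset Strict Implicit. Unset Printing Implicit Defensive.
Import Order.TTheory GRing.Theory Num.Theory.
Import numFieldNormedType.Exports.
Local Open Scope classical_set_scope.
Local Open Scope ring_scope.

Lemma norm_small_eq0 (K : numFieldType) (V : normedModType K) (v : V) :
  (forall e : K, 0 < e -> `|v| < e) -> v = 0.
Proof.
move=> small; apply/eqP; apply: contraT => v_neq0.
have v_gt0 : 0 < `|v| by rewrite normr_gt0.
by have := small _ v_gt0; rewrite ltxx.
Qed.

Lemma half_expr_small (R : realType) (K e : R[i]) : 0 <= K -> 0 < e ->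
  exists N : nat, K * (2^-1) ^+ N < e.
Proof.
move=> K_ge0 e_gt0; set t := K / e.
have t_ge0 : 0 <= t by rewrite divr_ge0 // ltW.
have tE : t = real_complex R (complex.Re t).
  by rewrite [LHS]complexE (ger0_Im t_ge0) mulr0 addr0.
have Ret_ge0 : 0 <= complex.Re t by rewrite -ler0c -tE.
have := archi_boundP Ret_ge0; set N := Num.Def.archi_bound _ => t_ltN.
exists N.
have {t_ltN} t_ltN : t < N%:R by rewrite tE -(rmorph_nat (real_complex R)) ltcR.
have -> : K = t * e by rewrite /t mulrVK // unitfE gt_eqF.
rewrite exprVn ltr_pdivrMr ?exprn_gt0 // mulrC ltr_pM2l //.
apply: lt_le_trans t_ltN _.
by rewrite -natrX ler_nat ltnW // ltn_expl.
Qed.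

Lemma half_geometric_sum (R : realType) (m d : nat) :
  \sum_(m <= k < m + d) ((2 : R[i])^-1) ^+ k + 2 * (2^-1) ^+ (m + d)
  = 2 * (2^-1) ^+ m.
Proof.
elim: d => [|d IH]; first by rewrite addn0 big_geq // add0r.
rewrite addnS big_nat_recr ?leq_addr //= -IH -addrA; congr (_ + _).
have two_neq0 : (2 : R[i]) != 0 by rewrite pnatr_eq0.
by rewrite exprS mulrA divff // mul1r mulr_natl mulr2n.
Qed.

Section BanachAlgebra.
Variables (R : realType) (A : completeNormedModType R[i]).
Variables (mul : A -> A -> A) (one : A).
Hypothesis HA : unital_banach_algebra mul one.

Lemma mul0l x : mul 0 x = 0.
Proof. by rewrite -(scale0r (0 : A)) (ba_mulZl HA) !scale0r. Qed.

Lemma mulBl x y z : mul (x - y) z = mul x z - mul y z.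
Proof. by rewrite (ba_mulDl HA) -scaleN1r (ba_mulZl HA) scaleN1r. Qed.

Lemma mulBr x y z : mul z (x - y) = mul z x - mul z y.
Proof. by rewrite (ba_mulDr HA) -scaleN1r (ba_mulZr HA) scaleN1r. Qed.

Lemma mul_suml (f : nat -> A) m n z :
  mul (\sum_(m <= k < n) f k) z = \sum_(m <= k < n) mul (f k) z.
Proof.
by apply: (big_morph (mul^~ z)); [move=> a b; rewrite (ba_mulDl HA) | exact: mul0l].
Qed.

Lemma norm_one_ge1 : one != 0 -> 1 <= `|one|.
Proof.
move=> one_neq0; have := ba_norm_mul HA one one; rewrite (ba_mul1l HA).
by rewrite -{1}(mul1r `|one|) ler_pM2r ?normr_gt0.
Qed.

Definition upow (u : A) (k : nat) : A := iter k (mul^~ u) one.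

Section NeumannSeries.
Variable u : A.
Hypothesis u_small : `|u| <= 2^-1.

Lemma norm_upow k : `|upow u k| <= `|one| * (2^-1) ^+ k.
Proof.
elim: k => [|k IH]; first by rewrite expr0 mulr1.
rewrite exprS mulrCA mulrC; apply: le_trans (ba_norm_mul HA _ _) _.
by apply: ler_pM; rewrite ?normr_ge0.
Qed.

Lemma norm_sum_upow m n :
  `|\sum_(m <= k < n) upow u k| <= 2 * `|one| * (2^-1) ^+ m.
Proof.
have bound_ge0 : 0 <= 2 * `|one| * (2^-1) ^+ m.
  by rewrite !mulr_ge0 ?ler0n ?normr_ge0 ?exprn_ge0 ?invr_ge0 ?ler0n.
apply: le_trans (ler_norm_sum _ _ _) _.
have [le_mn|lt_nm] := leqP m n; last by rewrite big_geq // ltnW.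
apply: le_trans (ler_sum _ (fun k _ => norm_upow k)) _.
rewrite -mulr_sumr -mulrA [2 * _]mulrC -mulrA ler_wpM2l ?normr_ge0 //.
rewrite -(subnKC le_mn) mulrC -(half_geometric_sum R m (n - m)) lerDl.
by rewrite mulr_ge0 ?ler0n ?exprn_ge0 // invr_ge0 ler0n.
Qed.

Lemma upow_series_cvg : cvgn (series (upow u)).
Proof.
have K_ge0 : 0 <= 2 * `|one| by rewrite mulr_ge0 ?ler0n ?normr_ge0.
apply/cauchy_cvgP/cauchy_seriesP => e e_gt0.
have [N tailN] := half_expr_small K_ge0 e_gt0.
exists ([set m | (N <= m)%N], setT); first by split; [exists N | exact: filterT].
case=> m n /= [le_Nm _]; apply: le_lt_trans (norm_sum_upow m n) _.
apply: le_lt_trans tailN; rewrite ler_wpM2l // ler_wiXn2l //.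
by rewrite invf_le1 ?ler1n // ltr0n.
Qed.

Lemma upow_series_mul N : mul (series (upow u) N) (one - u) = one - upow u N.
Proof.
rewrite mulBr (ba_mul1r HA) /series /= mul_suml.
have -> : \sum_(0 <= k < N) mul (upow u k) u = \sum_(0 <= k < N) upow u k.+1 by [].
by rewrite -opprB -sumrB telescope_sumr // opprB.
Qed.

(* Passing to the limit in upow_series_mul, using u^N -> 0. *)
Lemma upow_series_left_inverse : mul (limn (series (upow u))) (one - u) = one.
Proof.
set s := limn _; set x := one - u.
apply/eqP; rewrite -subr_eq0; apply/eqP; apply: norm_small_eq0 => e e_gt0.
have c_gt0 : 0 < 2 * (`|x| + 1) by rewrite mulr_gt0 ?ltr0n // ltr_wpDl.
have d_gt0 : 0 < e / (2 * (`|x| + 1)) by rewrite divr_gt0.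
have near_s := upow_series_cvg; move/cvgrPdist_lt/(_ _ d_gt0): near_s => near_s.
have [N0 tailN0] := half_expr_small (normr_ge0 one) (divr_gt0 e_gt0 (ltr0n _ 2)).
have eventually_N0 : \forall N \near \oo, (N0 <= N)%N by exists N0.
have [N [sN_close le_N0N]] := filter_ex (filterI near_s eventually_N0).
have -> : mul s x - one = mul (s - series (upow u) N) x - upow u N.
  by rewrite mulBl upow_series_mul opprB -addrA (addrAC (upow u N)) subrr add0r.
apply: le_lt_trans (ler_normB _ _) _; rewrite [X in _ < X](splitr e).
apply: ler_ltD.
  apply: le_trans (ba_norm_mul HA _ _) _.
  apply: le_trans (_ : e / (2 * (`|x| + 1)) * (`|x| + 1) <= _).
    by apply: ler_pM; rewrite ?normr_ge0 ?lerDl ?ler01 // ltW.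
  by rewrite invfM mulrA mulfVK // gt_eqF // ltr_wpDl.
apply: le_lt_trans (norm_upow N) _; apply: le_lt_trans tailN0.
rewrite ler_wpM2l ?normr_ge0 // ler_wiXn2l //.
by rewrite invf_le1 ?ler1n // ltr0n.
Qed.

End NeumannSeries.

Lemma left_invertible_near_one x : `|one - x| <= 2^-1 -> exists y, mul y x = one.
Proof.
move=> x_near1; exists (limn (series (upow (one - x)))).
have xE : x = one - (one - x) by rewrite opprB addrC subrK.
by rewrite {2}xE upow_series_left_inverse.
Qed.


Lemma norm_mul3_le a b c : `|mul (mul a b) c| <= `|a| * `|b| * `|c|.
Proof.
apply: le_trans (ba_norm_mul HA _ _) _.
by rewrite ler_wpM2r ?normr_ge0 // (ba_norm_mul HA).
Qed.

Lemma norm_right_inverse_le z v :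
  mul z v = one -> `|z - one| <= 2^-1 -> `|v| <= 2 * `|one|.
Proof.
move=> zv z_near1.
have vE : v = one - mul (z - one) v by rewrite mulBl zv (ba_mul1l HA) opprB addrC subrK.
have : `|v| <= `|one| + 2^-1 * `|v|.
  rewrite {1}vE; apply: le_trans (ler_normB _ _) _; rewrite lerD2l.
  by apply: le_trans (ba_norm_mul HA _ _) _; rewrite ler_wpM2r ?normr_ge0.
rewrite -lerBlDr {1}(splitr `|v|) mulrC addrK.
by rewrite ler_pdivrMl // ltr0n.
Qed.

Section DivisionAlgebra.
Hypothesis Adiv : is_division_algebra (fun _ => True) (@eq A) mul one 0.

(* In a division algebra, xy close to 1 forces yx close to 1: with v the
   inverse of xy, yv is the inverse of x, so yx - 1 = y (1 - v) x and
   1 - v = (xy - 1) v. *)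
Lemma division_swap_defect x y : `|mul x y - one| < 2^-1 ->
  `|mul y x - one| <= `|y| * (`|mul x y - one| * (2 * `|one|)) * `|x|.
Proof.
have [one_neq0 inverse] := Adiv.
set z := mul x y => z_near1.
have z_neq0 : z <> 0.
  move=> z0; move: z_near1; rewrite z0 sub0r normrN => one_small.
  have half_lt1 : (2 : R[i])^-1 < 1 by rewrite invf_lt1 ?ltr1n // ltr0n.
  have one_ge1 := norm_one_ge1 (introN eqP one_neq0).
  by have := lt_le_trans (lt_trans one_small half_lt1) one_ge1; rewrite ltxx.
have x_neq0 : x <> 0 by move=> x0; apply: z_neq0; rewrite /z x0 mul0l.
have [v [_ [zv _]]] := inverse z I z_neq0.
have [w [_ [_ wx]]] := inverse x I x_neq0.
have wE : w = mul y v.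
  by rewrite -(ba_mul1r HA w) -zv /z -(ba_mulA HA) (ba_mulA HA w) wx (ba_mul1l HA).
have defect : mul y x - one = mul (mul y (mul (z - one) v)) x.
  by rewrite mulBl zv (ba_mul1l HA) mulBr (ba_mul1r HA) mulBl -wE wx.
rewrite defect; apply: le_trans (norm_mul3_le _ _ _) _.
rewrite ler_wpM2r ?normr_ge0 // ler_wpM2l ?normr_ge0 //.
apply: le_trans (ba_norm_mul HA _ _) _.
by rewrite ler_wpM2l ?normr_ge0 // (norm_right_inverse_le zv) // ltW.
Qed.

End DivisionAlgebra.

Section Ultrapower.
Variable U : set_system nat.
Context {U_proper : ProperFilter U}.

Lemma bounded_seq_const (v : A) : bounded_seq (fun _ : nat => v).
Proof. by exists `|v|. Qed.

Lemma bounded_seq_mul a b :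
  bounded_seq a -> bounded_seq b -> bounded_seq (fun n => mul (a n) (b n)).
Proof.
move=> [Ma a_le] [Mb b_le]; exists (Ma * Mb) => n.
by apply: le_trans (ba_norm_mul HA _ _) _; apply: ler_pM; rewrite ?normr_ge0.
Qed.

(* A constant sequence is U-null only if it is zero, since U is proper: the
   diagonal embedding of A into its ultrapower is injective. *)
Lemma ultrapower_eqv_const (a b : A) :
  ultrapower_eqv U (fun _ => a) (fun _ => b) -> a = b.
Proof.
move=> ab_null; apply/eqP; rewrite -subr_eq0; apply/eqP.
by apply: norm_small_eq0 => e e_gt0; have [n] := filter_ex (ab_null e e_gt0).
Qed.

Lemma c_U_dominated (f g : nat -> A) (K r : R[i]) : 0 <= K -> 0 < r ->
  c_U U g -> (forall n, `|g n| < r -> `|f n| <= K * `|g n|) -> c_U U f.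
Proof.
move=> K_ge0 r_gt0 g_null f_dom e e_gt0.
have K1_gt0 : 0 < K + 1 by rewrite ltr_wpDl.
have d_gt0 : 0 < e / (K + 1) by rewrite divr_gt0.
apply: filterS2 (g_null r r_gt0) (g_null _ d_gt0) => n g_lt_r g_lt_d.
apply: le_lt_trans (f_dom n g_lt_r) _.
apply: le_lt_trans (_ : K * (e / (K + 1)) < e); first by rewrite ler_wpM2l // ltW.
by rewrite mulrA ltr_pdivrMr // mulrDr mulr1 mulrC ltrDl.
Qed.

(* If every bounded non-null sequence a admits b, c with bac = 1 in the
   ultrapower, then A is purely infinite in the second sense: pick an index
   where b_n a c_n is within 1/2 of 1 and invert it on the left. *)
Lemma two_sided_divisor_descends :
  (forall a, bounded_seq a -> ~ ultrapower_eqv U a (fun _ => 0) ->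
     exists b c, bounded_seq b /\ bounded_seq c /\
       ultrapower_eqv U (fun n => mul (mul (b n) (a n)) (c n)) (fun _ => one)) ->
  forall a, a <> 0 -> exists b c, mul (mul b a) c = one.
Proof.
move=> ultra_pi a a_neq0.
have a_non_null : ~ ultrapower_eqv U (fun _ => a) (fun _ => 0).
  by move/ultrapower_eqv_const.
have [b [c [_ [_ bac1]]]] := ultra_pi _ (bounded_seq_const a) a_non_null.
have half_gt0 : (0 : R[i]) < 2^-1 by rewrite invr_gt0 ltr0n.
have [n bac_near1] := filter_ex (bac1 _ half_gt0).
have [y y_left_inv] : exists y, mul y (mul (mul (b n) a) (c n)) = one.
  by apply: left_invertible_near_one; rewrite distrC ltW.
by exists (mul y (b n)), (c n); rewrite -!(ba_mulA HA) in y_left_inv *.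
Qed.

Section DivisionAlgebra.
Hypothesis Adiv : is_division_algebra (fun _ => True) (@eq A) mul one 0.

(* If A is a division algebra, one-sided inverses in the ultrapower are
   two-sided, by the uniform estimate of division_swap_defect. *)
Lemma ultrapower_eqv_one_swap xs ys : bounded_seq xs -> bounded_seq ys ->
  ultrapower_eqv U (fun n => mul (xs n) (ys n)) (fun _ => one) ->
  ultrapower_eqv U (fun n => mul (ys n) (xs n)) (fun _ => one).
Proof.
move=> [Mx xs_le] [My ys_le] xy1.
have Mx_ge0 : 0 <= Mx by apply: le_trans (xs_le 0%N).
have My_ge0 : 0 <= My by apply: le_trans (ys_le 0%N).
have half_gt0 : (0 : R[i]) < 2^-1 by rewrite invr_gt0 ltr0n.
apply: (c_U_dominated (K := My * (2 * `|one|) * Mx) _ half_gt0 xy1).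
  by rewrite !mulr_ge0 ?ler0n ?normr_ge0.
move=> n /= xy_near1; apply: le_trans (division_swap_defect Adiv xy_near1) _.
set d := `|_ - one|.
have -> : My * (2 * `|one|) * Mx * d = My * (d * (2 * `|one|)) * Mx by ring.
by apply: ler_pM; rewrite ?mulr_ge0 ?normr_ge0 ?ler0n // ler_pM ?mulr_ge0 ?normr_ge0 ?ler0n.
Qed.

(* Hence, if moreover every non-null element of the ultrapower divides 1 on
   both sides, the ultrapower is a division algebra: from bac = 1 we get
   that cb is a two-sided inverse of a. *)
Lemma ultrapower_division :
  (forall a, bounded_seq a -> ~ ultrapower_eqv U a (fun _ => 0) ->
     exists b c, bounded_seq b /\ bounded_seq c /\
       ultrapower_eqv U (fun n => mul (mul (b n) (a n)) (c n)) (fun _ => one)) ->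
  is_division_algebra (@bounded_seq R A) (ultrapower_eqv U)
    (fun a b n => mul (a n) (b n)) (fun _ => one) (fun _ => 0).
Proof.
move=> ultra_pi; split; first by move/ultrapower_eqv_const; exact: Adiv.1.
move=> a a_bd a_non_null.
have [b [c [b_bd [c_bd bac1]]]] := ultra_pi a a_bd a_non_null.
have assoc (x y z : nat -> A) :
    (fun n => mul (x n) (mul (y n) (z n))) = (fun n => mul (mul (x n) (y n)) (z n)).
  by apply: funext => n; rewrite (ba_mulA HA).
exists (fun n => mul (c n) (b n)); split; first exact: bounded_seq_mul.
split.
- rewrite assoc; apply: ultrapower_eqv_one_swap => //; first exact: bounded_seq_mul.
  by rewrite assoc.
- rewrite -assoc; apply: ultrapower_eqv_one_swap bac1 => //; exact: bounded_seq_mul.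
Qed.

End DivisionAlgebra.

End Ultrapower.

End BanachAlgebra.

Unset Implicit Arguments.
Set Strict Implicit.

Theorem corollary2p4 (R : realType) (A : completeNormedModType R[i])
    (mul : A -> A -> A) (one : A) (U : set_system nat)
    (HU : UltraFilter U) (HUnp : nonprincipal U)
    (HA : unital_banach_algebra mul one) :
  ultrapower_purely_infinite U mul one -> purely_infinite mul one.
Proof.
move=> [ultra_nondiv ultra_pi]; split.
  by move=> Adiv; apply: ultra_nondiv; exact: ultrapower_division.
move=> a _ a_neq0.
have [b [c bac1]] := two_sided_divisor_descends HA ultra_pi a_neq0.
by exists b, c.
Qed.
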